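(* Let $G$ be a connected simple graph in which every vertex has odd degree, and let $m=|E(G)|$. Let $f_G$ and $\tilde f_G$ be the formulas defined below. If $m$ is even, then $f_G$ is satisfiable and $\tilde f_G$ is unsatisfiable; if $m$ is odd, then $f_G$ is unsatisfiable and $\tilde f_G$ is satisfiable.
   Context: Construction of $f_G$: for each edge $e=\{v,w\}$ of $G$ introduce two variables and literals $a^{v,w},b^{v,w}$ (literals on $v$'s side) with $a^{w,v}=\neg a^{v,w}$ and $b^{w,v}=\neg b^{v,w}$ (literals on $w$'s side). For each vertex $v$ with incident edges $\{v,w_1\},\dots,\{v,w_k\}$ ($k=d(v)$), write $a_i=a^{v,w_i}$, $b_i=b^{v,w_i}$ and add the clauses $(\bigvee_{i\in S}a_i)\vee(\bigvee_{i\in[k]\setminus S}b_i)$ for every $S\subseteq[k]$ with $|S|$ even, together with the clauses $a_i\vee b_i$ for $1\le i\le k$. The formula $f_G$ is the conjunction of all these clauses over all vertices. The twisted formula $\tilde f_G$ is obtained in the same way, except that for one arbitrarily chosen edge $\{v_0,w_0\}$ the negation pairing is twisted: $a^{v_0,w_0}=\neg b^{w_0,v_0}$ and $b^{v_0,w_0}=\neg a^{w_0,v_0}$ (all other edges as before). *)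

From mathcomp Require Import all_boot.
Set Implicit Arguments. Unset Strict Implicit. Unset Printing Implicit Defensive.

Section Defs.
Variables (T : finType) (e : rel T).

(* neighbours of v (for a simple graph, in bijection with incident edges) *)
Definition neigh (v : T) : {set T} := [set w | e v w].

Definition edges : {set {set T}} :=
  [set E : {set T} | [exists x, [exists y, e x y && (E == [set x; y])]]].
Definition nedges : nat := #|edges|.

(* An assignment gives, to each ordered pair (v,w), a pair of boolean values;
   only the values at "canonical" pairs (rank v < rank w) with e v w are used:
   for the edge {v,w} with v canonical, the two variables of the edge are
   x_a := (alpha v w).1 and x_b := (alpha v w).2, and a^{v,w} = x_a,
   b^{v,w} = x_b.  On the other side, a^{w,v} = ~ a^{v,w}, b^{w,v} = ~ b^{v,w},
   except for the twisted edge {v0,w0}, where a^{w,v} = ~ b^{v,w} and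
   b^{w,v} = ~ a^{v,w}. *)
Definition assignment := T -> T -> bool * bool.

Definition canon (v w : T) : bool := (enum_rank v < enum_rank w)%N.

Definition is_twisted (tw : option (T * T)) (v w : T) : bool :=
  if tw is Some (v0, w0) then
    ((v == v0) && (w == w0)) || ((v == w0) && (w == v0))
  else false.

Definition lits (tw : option (T * T)) (alpha : assignment) (v w : T)
  : bool * bool :=
  if canon v w then alpha v w
  else if is_twisted tw v w then (~~ (alpha w v).2, ~~ (alpha w v).1)
  else (~~ (alpha w v).1, ~~ (alpha w v).2).

Definition parity_clause tw alpha (v : T) (S : {set T}) : bool :=
  [exists w in neigh v,
     ((w \in S) && (lits tw alpha v w).1) ||
     ((w \notin S) && (lits tw alpha v w).2)].

(* truth value of the formula f_G (tw = None) or the twisted formula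
   (tw = Some (v0,w0)) under alpha *)
Definition formula (tw : option (T * T)) (alpha : assignment) : bool :=
  [forall v, [forall S : {set T},
     ((S \subset neigh v) && ~~ odd #|S|) ==> parity_clause tw alpha v S]] &&
  [forall v, [forall w in neigh v,
     (lits tw alpha v w).1 || (lits tw alpha v w).2]].

Definition satisfiable (tw : option (T * T)) : Prop :=
  exists alpha : assignment, formula tw alpha.

End Defs.

From mathcomp Require Import all_boot.
Set Implicit Arguments. Unset Strict Implicit. Unset Printing Implicit Defensive.

(* A satisfying assignment must have b^{v,w} = ~ a^{v,w} on every edge (the
   clauses a \/ b at both endpoints), and then the only even S whose parity
   clause at v fails is the set of i with a_i false; as deg v is odd, all
   clauses at v hold iff an even number of the a_i are true.  Summing these
   parities over all vertices, an untwisted edge contributes a + ~ a = 1 and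
   the twisted edge a + a = 0, so satisfiability forces m, resp. m + 1, to be
   even.  Conversely, toggling the a-variable of every edge along a path
   changes the parity only at its two endpoints, so in a connected graph any
   even set of odd vertices can be cleared. *)

Lemma odd_card_addb (T : finType) (A : {pred T}) :
  odd #|A| = \big[addb/false]_(x in A) true.
Proof. by rewrite -sum1_card (big_morph odd oddD (erefl : odd 0 = false)). Qed.

Lemma big_addb_pred1 (T : finType) (P : pred T) (b : T) :
  \big[addb/false]_(w | P w) (w == b) = P b.
Proof.
rewrite big_mkcond (bigD1 b) //= eqxx big1 => [|w /negbTE ->].
  by case: (P b).
by rewrite if_same.
Qed.

Section Orientation.
Variable T : finType.

Lemma canon_irr (x : T) : canon x x = false.
Proof. by rewrite /canon ltnn. Qed.

Lemma canonNC (x y : T) : x != y -> canon y x = ~~ canon x y.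
Proof.
move=> nxy; rewrite /canon ltnNge leq_eqVlt.
suff /negbTE -> : nat_of_ord (enum_rank x) != enum_rank y by [].
by apply: contra nxy => /eqP/val_inj/enum_rank_inj ->.
Qed.

Lemma is_twistedC tw (v w : T) : is_twisted tw w v = is_twisted tw v w.
Proof.
by case: tw => [[a b]|] //=; rewrite orbC (andbC (v == a)) (andbC (v == b)).
Qed.

Lemma lits_swap tw (al : assignment T) (v w : T) : v != w ->
  lits tw al w v = if is_twisted tw v w
                   then (~~ (lits tw al v w).2, ~~ (lits tw al v w).1)
                   else (~~ (lits tw al v w).1, ~~ (lits tw al v w).2).
Proof.
move=> nvw; rewrite /lits (canonNC nvw) is_twistedC.
case: (canon v w) => //=.
by case: is_twisted; case: (al w v) => a b; rewrite /= !negbK.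
Qed.

End Orientation.

Section Graph.
Variables (T : finType) (e : rel T).
Hypotheses (e_sym : symmetric e) (e_irr : irreflexive e).

Lemma edge_neq v w : e v w -> v != w.
Proof. by apply: contraTneq => ->; rewrite e_irr. Qed.

Definition canon_edges : {set T * T} := [set p | e p.1 p.2 && canon p.1 p.2].

Lemma card_canon_edges : #|canon_edges| = nedges e.
Proof.
rewrite /nedges; have -> : edges e = (fun p => [set p.1; p.2]) @: canon_edges.
  apply/setP => E; rewrite inE; apply/existsP/imsetP.
    case=> x /existsP [y /andP [exy /eqP ->]].
    have [cxy | ncxy] := boolP (canon x y).
      by exists (x, y); rewrite // inE exy cxy.
    exists (y, x); last by rewrite setUC.
    by rewrite inE /= e_sym exy canonNC // edge_neq.
  case=> [[x y]]; rewrite inE => /andP [exy _] ->.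
  by exists x; apply/existsP; exists y; rewrite exy eqxx.
apply/esym/card_in_imset => -[a b] [a' b']; rewrite !inE /=.
move=> /andP [eab cab] /andP [_ cab'] Eab.
have /set2P [Ea | Ea] : a \in [set a'; b'] by rewrite -Eab set21.
  subst a'; have /set2P [Eb | -> //] : b \in [set a; b'] by rewrite -Eab set22.
  by move: cab; rewrite Eb canon_irr.
have /set2P [Ea' | Ea'] : a' \in [set a; b] by rewrite Eab set21.
  by move: cab'; rewrite Ea' Ea canon_irr.
by move: cab'; rewrite Ea' -Ea canonNC ?cab // edge_neq.
Qed.

Lemma big_canon_edges R idx (op : Monoid.com_law idx) (F : T -> T -> R) :
  \big[op/idx]_(p | e p.1 p.2) F p.1 p.2 =
  \big[op/idx]_(p in canon_edges) op (F p.1 p.2) (F p.2 p.1).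
Proof.
rewrite big_split (bigID (fun p => canon p.1 p.2)) /=; congr (op _ _).
  by apply: eq_bigl => p; rewrite inE.
rewrite (reindex_inj (can_inj (@swap_pairK T T))) /=.
apply: eq_bigl => [[v w]]; rewrite inE /= e_sym.
by case evw: (e v w) => //=; rewrite canonNC ?negbK // edge_neq.
Qed.

Definition twist_parity tw :=
  \big[addb/false]_(p in canon_edges) is_twisted tw p.1 p.2.

Lemma twist_parity_None : twist_parity None = false.
Proof. exact: big1. Qed.

Lemma twist_parity_Some v0 w0 : e v0 w0 -> twist_parity (Some (v0, w0)) = true.
Proof.
move=> e0; have n0 := edge_neq e0.
pose p0 := if canon v0 w0 then (v0, w0) else (w0, v0).
have p0_edge : p0 \in canon_edges.
  rewrite inE /p0; case: ifP => [-> | /negbT c0]; first by rewrite e0.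
  by rewrite /= e_sym e0 canonNC.
have twisted_p0 p :
    p \in canon_edges -> is_twisted (Some (v0, w0)) p.1 p.2 = (p == p0).
  move=> pE; apply/idP/eqP => [|->]; last first.
    by rewrite /p0; case: ifP; rewrite /= !eqxx ?orbT.
  case: p pE => v w; rewrite inE /= => /andP [_ cvw].
  case/orP=> /andP [/eqP Ev /eqP Ew]; subst v w; rewrite /p0.
  - by rewrite cvw.
  - by rewrite canonNC 1?eq_sym // cvw.
rewrite /twist_parity (bigD1 p0) // twisted_p0 // eqxx big1 //.
move=> p /andP [pE np0].
by rewrite twisted_p0 // (negbTE np0).
Qed.

Section Clauses.
Variable tw : option (T * T).

Definition true_lits (al : assignment T) v : {set T} :=
  [set w | (lits tw al v w).1].
Definition trues al v := neigh e v :&: true_lits al v.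
Definition falses al v := neigh e v :\: true_lits al v.

Definition complementary (al : assignment T) :=
  forall v w, e v w -> (lits tw al v w).2 = ~~ (lits tw al v w).1.

Lemma odd_neigh al v :
  odd #|neigh e v| = odd #|trues al v| (+) odd #|falses al v|.
Proof. by rewrite -oddD cardsID. Qed.

Lemma formula_complementary al : formula e tw al -> complementary al.
Proof.
case/andP=> _ /forallP lits_or v w evw.
have /forall_inP/(_ w) := lits_or v; rewrite inE => /(_ evw).
have /forall_inP/(_ v) := lits_or w; rewrite inE e_sym => /(_ evw).
rewrite lits_swap ?edge_neq //.
by case: is_twisted; case: (lits tw al v w) => [[] []].
Qed.

Lemma parity_clauseE al v (S : {set T}) :
  complementary al -> S \subset neigh e v ->
  parity_clause e tw al v S = (S != falses al v).
Proof.
move=> compl_al sSN; apply/idP/idP => [/existsP [w /andP [wN]] | ].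
  rewrite inE in wN; rewrite compl_al //; apply: contraTneq => ->.
  by rewrite !inE wN; case: (lits tw al v w).1.
apply: contraNT => /existsPn noW; apply/eqP/setP => w; rewrite !inE.
have [evw | nevw] := boolP (e v w); rewrite ?andbT ?andbF; last first.
  by apply/negbTE; apply: contra nevw => /(subsetP sSN); rewrite inE.
move: (noW w); rewrite inE evw compl_al //=.
by case: (w \in S); case: (lits tw al v w).1.
Qed.

Lemma formulaP al :
  formula e tw al <-> complementary al /\ forall v, odd #|falses al v|.
Proof.
split=> [f_al | [compl_al odd_falses]].
  have compl_al := formula_complementary f_al; split=> // v.
  have sFN : falses al v \subset neigh e v := subsetDl _ _.
  case/andP: f_al => /forallP/(_ v)/forallP/(_ (falses al v)) + _.
  by rewrite parity_clauseE // sFN eqxx implybF negbK.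
apply/andP; split; apply/forallP => v.
  apply/forallP => S; apply/implyP => /andP [sSN even_S].
  by rewrite parity_clauseE //; apply: contraNneq even_S => ->.
apply/forall_inP => w; rewrite inE => evw.
by rewrite compl_al // orbN.
Qed.

Lemma odd_card_trues al v :
  odd #|trues al v| = \big[addb/false]_(w | e v w) (lits tw al v w).1.
Proof.
rewrite odd_card_addb big_mkcond [RHS]big_mkcond; apply: eq_bigr => w _.
by rewrite !inE; case: (e v w); case: (lits tw al v w).1.
Qed.

Lemma sum_odd_trues al : complementary al ->
  \big[addb/false]_v odd #|trues al v| = odd (nedges e) (+) twist_parity tw.
Proof.
move=> compl_al.
rewrite (eq_bigr _ (fun v _ => odd_card_trues al v)) pair_big_dep /=.
rewrite (big_canon_edges addb (fun v w => (lits tw al v w).1)).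
rewrite -card_canon_edges odd_card_addb.
rewrite /twist_parity -big_split; apply: eq_bigr => -[v w]; rewrite inE /=.
case/andP=> evw _; rewrite (lits_swap _ _ (edge_neq evw)) compl_al //.
by case: is_twisted; case: (lits tw al v w).1.
Qed.

Definition assign_of (x : T -> T -> bool) : assignment T :=
  fun v w => (x v w, ~~ x v w).

Lemma assign_of_complementary x : complementary (assign_of x).
Proof.
move=> v w _; rewrite /lits /assign_of.
by case: (canon v w); case: (is_twisted tw v w); rewrite /= ?negbK.
Qed.

(* With odd degrees, the vertices where some parity clause fails. *)
Definition defect x : {set T} := [set v | odd #|trues (assign_of x) v|].

Definition flip (x : T -> T -> bool) a b : T -> T -> bool :=
  fun v w => x v w (+) ((v, w) \in [:: (a, b); (b, a)]).

Lemma lits_flip x a b v w :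
  (lits tw (assign_of (flip x a b)) v w).1 =
  (lits tw (assign_of x) v w).1 (+) ((v, w) \in [:: (a, b); (b, a)]).
Proof.
have flipC :
    ((w, v) \in [:: (a, b); (b, a)]) = ((v, w) \in [:: (a, b); (b, a)]).
  by rewrite !inE !xpair_eqE orbC andbC; congr (_ || _); rewrite andbC.
rewrite /lits /assign_of /flip flipC.
by case: (canon v w); case: (is_twisted tw v w); case: (x w v); case: (_ \in _).
Qed.

Lemma defect_flip x a b : e a b ->
  forall v, (v \in defect (flip x a b)) =
            (v \in defect x) (+) ((v == a) (+) (v == b)).
Proof.
move=> eab v; rewrite !inE !odd_card_trues.
under eq_bigr do rewrite lits_flip.
rewrite big_split /=; congr (_ (+) _).
have nab := edge_neq eab.
case: (v =P a) => [-> | /eqP/negbTE nva].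
  rewrite (negbTE nab); transitivity (\big[addb/false]_(w | e a w) (w == b)).
    by apply: eq_bigr => w _; rewrite !inE !xpair_eqE eqxx (negbTE nab) orbF.
  by rewrite big_addb_pred1 eab.
case: (v =P b) => [-> | /eqP/negbTE nvb].
  transitivity (\big[addb/false]_(w | e b w) (w == a)).
    by apply: eq_bigr => w _; rewrite !inE !xpair_eqE eqxx eq_sym (negbTE nab).
  by rewrite big_addb_pred1 e_sym eab.
by rewrite big1 // => w _; rewrite !inE !xpair_eqE nva nvb.
Qed.

Section Connected.
Hypothesis e_conn : forall x y : T, connect e x y.

Lemma defect_flip_path x u w : exists x' : T -> T -> bool,
  forall v, (v \in defect x') = (v \in defect x) (+) ((v == u) (+) (v == w)).
Proof.
have /connectP [p pth ->] := e_conn u w.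
elim: p u x pth => [|a p IH] u x /=.
  by move=> _; exists x => v; rewrite addbb addbF.
case/andP=> eua pth; have [x' defect_x'] := IH a (flip x u a) pth.
exists x' => v; rewrite defect_x' defect_flip //.
by case: (v \in defect x); case: (v == u); case: (v == a); case: (_ == _).
Qed.

Lemma clear_even_defect x : ~~ odd #|defect x| -> exists x', defect x' = set0.
Proof.
have [n] := ubnP #|defect x|; elim: n x => // n IH x.
rewrite ltnS => size_x even_x.
have [D0 | [u uD]] := set_0Vmem (defect x); first by exists x.
have [D1 | [w wD]] := set_0Vmem (defect x :\ u).
  by move: even_x; rewrite (cardsD1 u) uD D1 cards0.
have [x' defect_x'] := defect_flip_path x u w.
have defect_x'E : defect x' = defect x :\ u :\ w.
  apply/setP => v; rewrite defect_x' !in_setD1.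
  have [-> | _] := eqVneq v w.
    by move: wD; rewrite in_setD1 => /andP [/negbTE -> ->].
  by have [-> | _] := eqVneq v u; rewrite ?uD ?addbF.
move: size_x even_x; rewrite (cardsD1 u) uD (cardsD1 w (defect x :\ u)) wD.
rewrite -defect_x'E !add1n /= !negbK => /ltnW; exact: IH.
Qed.

Hypothesis odd_deg : forall v : T, odd #|neigh e v|.

Lemma satisfiableP : satisfiable e tw <-> odd (nedges e) = twist_parity tw.
Proof.
split=> [[al /formulaP [compl_al odd_falses]] | par_eq].
  have := sum_odd_trues compl_al; rewrite big1 => [/esym/negbT|v _].
    by rewrite negb_add => /eqP.
  by have := odd_neigh al v; rewrite odd_deg odd_falses; case: odd.
pose x0 (v w : T) := true.
have even_x0 : ~~ odd #|defect x0|.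
  rewrite odd_card_addb big_mkcond.
  rewrite (eq_bigr (fun v => odd #|trues (assign_of x0) v|)).
    by rewrite sum_odd_trues ?par_eq ?addbb //; apply: assign_of_complementary.
  by move=> v _; rewrite inE; case: odd.
have [x' defect_x'] := clear_even_defect even_x0.
exists (assign_of x'); apply/formulaP.
split=> [|v]; first exact: assign_of_complementary.
have := odd_neigh (assign_of x') v; rewrite odd_deg.
have : v \notin defect x' by rewrite defect_x' inE.
by rewrite inE => /negbTE ->.
Qed.

End Connected.
End Clauses.
End Graph.

Theorem lemma6 (T : finType) (e : rel T)
  (e_sym : symmetric e) (e_irr : irreflexive e)
  (e_conn : forall x y : T, connect e x y)
  (odd_deg : forall v : T, odd #|neigh e v|)
  (v0 w0 : T) (e0 : e v0 w0) :
  (~~ odd (nedges e) ->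
     satisfiable e None /\ ~ satisfiable e (Some (v0, w0))) /\
  (odd (nedges e) ->
     ~ satisfiable e None /\ satisfiable e (Some (v0, w0))).
Proof.
have satP tw := satisfiableP e_sym e_irr tw e_conn odd_deg.
have twist_None := twist_parity_None e.
have twist_Some := twist_parity_Some e_sym e_irr e0.
split=> m_par; split.
- by apply/satP; rewrite twist_None (negbTE m_par).
- by move/satP; rewrite twist_Some (negbTE m_par).
- by move/satP; rewrite twist_None m_par.
- by apply/satP; rewrite twist_Some.
Qed.
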